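(* Let $\tilde{\mathbf M}_D,\tilde{\mathbf S}_D\in\mathbb R^{\tilde n\times\tilde n}$ be block-diagonal positive definite matrices, let $\tilde{\mathbf M}_F,\tilde{\mathbf S}_F\in\mathbb R^{\tilde n\times\tilde n}$ be arbitrary (coupling) matrices, and set $\tilde{\mathbf M}=\tilde{\mathbf M}_D+\tilde{\mathbf M}_F$, $\tilde{\mathbf S}=\tilde{\mathbf S}_D+\tilde{\mathbf S}_F$. Consider the linear ODE $$\tilde{\mathbf M}_D\dot{\tilde{\mathbf x}}+\tilde{\mathbf S}_D\tilde{\mathbf x}+\tilde{\mathbf M}_F\dot{\tilde{\mathbf x}}+\tilde{\mathbf S}_F\tilde{\mathbf x}=\tilde{\mathbf u}(t)$$ and its ''hybrid Euler'' time discretization with step $\delta>0$ on an interval starting at time $t_q$: $$\tilde{\mathbf M}_D\frac{\tilde{\mathbf x}_{q,\ell+1}-\tilde{\mathbf x}_{q,\ell}}{\delta}+\tilde{\mathbf S}_D\tilde{\mathbf x}_{q,\ell+1}+\tilde{\mathbf M}_F\frac{\tilde{\mathbf x}_{q,\ell}-\tilde{\mathbf x}_{q,\ell-1}}{\delta}+\tilde{\mathbf S}_F\tilde{\mathbf x}_{q,\ell}=\tilde{\mathbf u}(t_q+(\ell+1)\delta),\quad \ell=0,1,\dots,$$ initialized by $\tilde{\mathbf x}_{q,0}=\tilde{\mathbf x}_{q,-1}=\tilde{\mathbf x}(t_q)$. Then this scheme is consistent with local truncation error of order $1$, i.e., for every smooth function $\boldsymbol\xi$ and every $t$, with $\mathcal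 D(\boldsymbol\xi,t)=\tilde{\mathbf M}\dot{\boldsymbol\xi}(t)+\tilde{\mathbf S}\boldsymbol\xi(t)$ and $$\mathcal D_\delta(\boldsymbol\xi,t)=\tilde{\mathbf M}_D\frac{\boldsymbol\xi(t+\delta)-\boldsymbol\xi(t)}{\delta}+\tilde{\mathbf S}_D\boldsymbol\xi(t+\delta)+\tilde{\mathbf M}_F\frac{\boldsymbol\xi(t)-\boldsymbol\xi(t-\delta)}{\delta}+\tilde{\mathbf S}_F\boldsymbol\xi(t),$$ one has $\mathcal D_\delta(\boldsymbol\xi,t)-\mathcal D(\boldsymbol\xi,t)=O(\delta)$ as $\delta\to0$. Further, the scheme is zero-stable provided that $\rho(\tilde{\mathbf M}_D^{-1}\tilde{\mathbf M}_F)<1$, where $\rho(\cdot)$ denotes the spectral radius.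
   Context: Origin of the matrices: a scalar field obeying a linear PDE $\partial x/\partial t+\mathcal A(x)=f$ on a bounded domain $\Omega$ is discretized by finite elements with basis functions $\phi_1,\dots,\phi_n$, giving $\mathbf M\dot{\mathbf x}+\mathbf S\mathbf x=\mathbf u$ with positive definite mass matrix $\mathbf M=\int_\Omega\boldsymbol\phi\boldsymbol\phi^T$ and stiffness matrix $\mathbf S$. The domain is decomposed into overlapping subdomains $\Omega_1,\dots,\Omega_N$; $\mathbf x^m$ collects the FE coefficients of vertices internal to $\Omega_m$ (or on $\partial\Omega\cap\partial\Omega_m$), and the augmented state is $\tilde{\mathbf x}=\mathrm{col}\{\mathbf x^1,\dots,\mathbf x^N\}$ (with repeated components due to overlap). The rows of the FE system for $\mathbf x^m$ read $\mathbf M^{mm}\dot{\mathbf x}^m+\sum_{j\ne m}\mathbf M^{mj}\dot{\mathbf x}^j+\mathbf S^{mm}\mathbf x^m+\sum_{j\ne m}\mathbf S^{mj}\mathbf x^j=\mathbf u^m$, where $\mathbf M^{mm},\mathbf S^{mm}$ are positive definite; then $\tilde{\mathbf M}_D=\mathrm{blockdiag}(\mathbf M^{11},\dots,\mathbf M^{NN})$, $\tilde{\mathbf S}_D=\mathrm{blockdiag}(\mathbf S^{11},\dots,\mathbf S^{NN})$, and $\tilde{\mathbf M}_F,\tilde{\mathbf S}_F$ collect the coupling blocks $\mathbf M^{mj},\mathbf S^{mj}$. Zero-stability is meant in the standard sense of the numerical analysis of multistep time-discretization schemes (stability of the limiting recursion $\tilde{\mathbf M}_D(\tilde{\mathbf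 x}_{\ell+1}-\tilde{\mathbf x}_\ell)+\tilde{\mathbf M}_F(\tilde{\mathbf x}_\ell-\tilde{\mathbf x}_{\ell-1})=0$ obtained as $\delta\to0$). *)

From HB Require Import structures.
From mathcomp Require Import all_boot all_order all_algebra.
From mathcomp Require Import all_classical all_reals all_analysis.
From mathcomp Require Import complex.
Set Implicit Arguments. Unset Strict Implicit. Unset Printing Implicit Defensive.
Import Order.TTheory GRing.Theory Num.Theory.
Local Open Scope ring_scope.
Local Open Scope classical_set_scope.

Definition posdef (R : realType) (n : nat) (A : 'M[R]_n) : Prop :=
  forall x : 'cV[R]_n, x != 0 -> 0 < (x^T *m A *m x) 0 0.

Definition smooth (R : realType) (f : R -> R) : Prop :=
  forall (k : nat) (t : R), derivable (derive1n k f) t 1.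

Definition vecfun (R : realType) (n : nat) (xi : 'I_n -> R -> R) (t : R) : 'cV[R]_n :=
  \col_i xi i t.

Definition vecderiv (R : realType) (n : nat) (xi : 'I_n -> R -> R) (t : R) : 'cV[R]_n :=
  \col_i (derive1 (xi i)) t.

Definition Dcont (R : realType) (n : nat) (MD SD MF SF : 'M[R]_n)
  (xi : 'I_n -> R -> R) (t : R) : 'cV[R]_n :=
  (MD + MF) *m vecderiv xi t + (SD + SF) *m vecfun xi t.

Definition Ddisc (R : realType) (n : nat) (MD SD MF SF : 'M[R]_n)
  (xi : 'I_n -> R -> R) (delta t : R) : 'cV[R]_n :=
  MD *m ((delta^-1) *: (vecfun xi (t + delta) - vecfun xi t))
  + SD *m vecfun xi (t + delta)
  + MF *m ((delta^-1) *: (vecfun xi t - vecfun xi (t - delta)))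
  + SF *m vecfun xi t.

Definition trunc_err_O_delta (R : realType) (n : nat) (MD SD MF SF : 'M[R]_n)
  (xi : 'I_n -> R -> R) (t : R) : Prop :=
  exists (C eta : R), 0 < eta /\
    forall delta : R, 0 < `|delta| < eta ->
      forall i : 'I_n,
        `|(Ddisc MD SD MF SF xi delta t - Dcont MD SD MF SF xi t) i 0| <= C * `|delta|.

Definition spectral_radius (R : realType) (n : nat) (A : 'M[R]_n) : R :=
  sup [set r : R | exists lam : R[i],
         eigenvalue (map_mx (fun x : R => x%:C%C) A) lam /\ r%:C%C = `|lam|].

(* Zero-stability: every solution of the limiting (delta -> 0) recursion
     MD (x_{l+1} - x_l) + MF (x_l - x_{l-1}) = 0,   l = 0, 1, ...
   is bounded, whatever the initial data x_{-1}, x_0.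
   Indexing: x 0 = x_{-1}, x (l.+1) = x_l. *)
Definition zero_stable (R : realType) (n : nat) (MD MF : 'M[R]_n) : Prop :=
  forall x : nat -> 'cV[R]_n,
    (forall l : nat, MD *m (x l.+2 - x l.+1) + MF *m (x l.+1 - x l) = 0) ->
    exists B : R, forall (l : nat) (i : 'I_n), `|x l i 0| <= B.

From HB Require Import structures.
From mathcomp Require Import all_boot all_order all_algebra.
From mathcomp Require Import all_classical all_reals all_analysis.
From mathcomp Require Import complex.
From mathcomp Require Import ring lra.
Import Order.TTheory GRing.Theory Num.Theory.
Local Open Scope ring_scope.

(* Consistency: by the mean value theorem the forward difference quotient of a
   smooth ξ at t is ξ'(c) for some c within δ of t, and ξ' is Lipschitz at t
   since it is differentiable there; hence forward and backward quotients are
   ξ'(t) + O(δ) and ξ(t + δ) - ξ(t) = O(δ). The truncation error is a fixed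
   linear combination of these quantities.
   Zero-stability: M_D is invertible (its diagonal blocks are positive definite),
   so the increments d_l = x_(l+1) - x_l of a solution of the limiting recursion
   are d_l = (-A)^l d_0 with A = M_D^-1 M_F. Factoring the characteristic
   polynomial of A over C and peeling off one linear factor at a time from the
   Cayley-Hamilton identity gives |A^k d_0| <= K s^k for every s > ρ(A).
   Taking ρ(A) < s < 1 makes the increments summable, so x_l stays bounded. *)

Section BigOAtZero.
Context {R : realType}.
Implicit Types (g h : R -> R) (c : R).

Definition bigO_at0 g : Prop :=
  exists K e : R, 0 < e /\ forall d, 0 < `|d| < e -> `|g d| <= K * `|d|.

Lemma bigO_at0_eq {g h} : (forall d, d != 0 -> g d = h d) ->
  bigO_at0 g -> bigO_at0 h.
Proof.
move=> gh [K [e [e0 gK]]]; exists K, e; split=> // d /[dup] /andP[d0 _] /gK.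
by rewrite gh // -normr_gt0.
Qed.

Lemma bigO_at0_cst0 : bigO_at0 (fun=> 0).
Proof. by exists 0, 1; split=> // d _; rewrite normr0 mul0r. Qed.

Lemma bigO_at0_id : bigO_at0 id.
Proof. by exists 1, 1; split=> // d _; rewrite mul1r. Qed.

Lemma bigO_at0D {g h} : bigO_at0 g -> bigO_at0 h -> bigO_at0 (fun d => g d + h d).
Proof.
move=> [K1 [e1 [e10 gK]]] [K2 [e2 [e20 hK]]].
exists (K1 + K2), (Num.min e1 e2); split; first by rewrite lt_min e10.
move=> d /andP[d0]; rewrite lt_min => /andP[de1 de2].
rewrite mulrDl (le_trans (ler_normD _ _)) // lerD //.
  by apply: gK; rewrite d0.
by apply: hK; rewrite d0.
Qed.

Lemma bigO_at0Ml c {g} : bigO_at0 g -> bigO_at0 (fun d => c * g d).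
Proof.
move=> [K [e [e0 gK]]]; exists (`|c| * K), e; split=> // d /gK dK.
by rewrite normrM -mulrA ler_wpM2l.
Qed.

Lemma bigO_at0_norm {g} : bigO_at0 g -> bigO_at0 (fun d => `|g d|).
Proof.
by move=> [K [e [e0 gK]]]; exists K, e; split=> // d; rewrite normr_id; exact: gK.
Qed.

Lemma bigO_at0_reflect {g} : bigO_at0 g -> bigO_at0 (fun d => g (- d)).
Proof.
by move=> [K [e [e0 gK]]]; exists K, e; split=> // d; rewrite -(normrN d); exact: gK.
Qed.

Lemma bigO_at0_mul_id {g} : bigO_at0 g -> bigO_at0 (fun d => d * g d).
Proof.
move=> [K [e [e0 gK]]]; exists `|K|, (Num.min e 1).
split; first by rewrite lt_min e0 ltr01.
move=> d /andP[d0]; rewrite lt_min => /andP[de d1].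
have /gK dK : 0 < `|d| < e by rewrite d0.
have Kd : `|g d| <= `|K| * `|d| by rewrite (le_trans dK) // ler_wpM2r // ler_norm.
rewrite normrM (le_trans (ler_wpM2l (normr_ge0 _) Kd)) // mulrC.
by rewrite -[leRHS]mulr1 ler_wpM2l ?mulr_ge0 // ltW.
Qed.

Lemma bigO_at0_sum {I : finType} {g : I -> R -> R} :
  (forall j, bigO_at0 (g j)) -> bigO_at0 (fun d => \sum_j g j d).
Proof.
move=> gO; rewrite unlock; elim: (index_enum I) => [|j r IH] /=.
  exact: bigO_at0_cst0.
exact: bigO_at0D.
Qed.

Lemma bigO_at0_uniform {I : finType} {g : I -> R -> R} :
  (forall j, bigO_at0 (g j)) ->
  exists K e : R, 0 < e /\ forall d, 0 < `|d| < e -> forall j, `|g j d| <= K * `|d|.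
Proof.
move=> gO; have [K [e [e0 sK]]] := bigO_at0_sum (fun j => bigO_at0_norm (gO j)).
exists K, e; split=> // d /sK sumK j; apply: le_trans sumK.
by rewrite [leRHS]ger0_norm ?sumr_ge0 // (bigD1 j) //= lerDl sumr_ge0.
Qed.

End BigOAtZero.

Section DifferenceQuotients.
Import numFieldNormedType.Exports.
Local Open Scope classical_set_scope.
Context {R : realType}.
Implicit Types (f : R -> R) (t : R).

Lemma derivable_bigO_increment f t : derivable f t 1 ->
  bigO_at0 (fun d => f (t + d) - f t).
Proof.
move=> df; have := cvgr_dist_le _ _ (df : _ --> 'D_1 f t) _ ltr01.
move=> /(_ (dnbhs_filter _)).
rewrite near_withinE => /nbhs_norm0P [e /= e0 He].
exists (`|'D_1 f t| + 1), e; split=> // d /andP[d0 de].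
have dn0 : d != 0 by rewrite -normr_gt0.
have := He d de dn0; rewrite /GRing.scale /= mulr1 [d + t]addrC.
set q := d^-1 * (f (t + d) - f t) => qD.
have q_le : `|q| <= `|'D_1 f t| + 1.
  rewrite -[q](subrK ('D_1 f t)) (le_trans (ler_normD _ _)) // addrC lerD2l.
  by rewrite -normrN opprB.
have -> : f (t + d) - f t = d * q by rewrite /q mulrA mulfV // mul1r.
by rewrite normrM mulrC ler_wpM2r.
Qed.

Lemma MVT_dist f : (forall x, derivable f x 1) -> forall a b,
  exists c, `|c - a| <= `|b - a| /\ f b - f a = derive1 f c * (b - a).
Proof.
move=> df a b.
have fD (x y z : R) : z \in `]x, y[%R -> is_derive z 1 f (derive1 f z).
  by move=> _; rewrite derive1E; apply: derivableP.
have fC (x y : R) : {within `[x, y], continuous f}.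
  by apply: derivable_within_continuous => z _.
have [ab|ba] := leP a b.
  have [c /andP[ac cb] ->] := MVT_segment ab (fD a b) (fC a b).
  by exists c; rewrite !ger0_norm ?subr_ge0 ?lerD2r.
have [c /andP[bc ca] fE] := MVT_segment (ltW ba) (fD b a) (fC b a).
exists c; rewrite !ler0_norm ?subr_le0 ?(ltW ba) // !opprB lerD2l lerN2.
by rewrite -opprB fE -mulrN opprB.
Qed.

Lemma diff_quotient_bigO f t : (forall x, derivable f x 1) ->
  derivable (derive1 f) t 1 ->
  bigO_at0 (fun d => d^-1 * (f (t + d) - f t) - derive1 f t).
Proof.
move=> df /derivable_bigO_increment [K [e [e0 f'K]]].
exists K, e; split=> // d /andP[d0 de].
have [c [ct fE]] := MVT_dist _ df t (t + d).
rewrite addrAC subrr add0r in ct fE.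
have K0 : 0 <= K.
  by rewrite -(pmulr_lge0 _ d0) (le_trans _ (f'K d _)) // d0.
rewrite fE mulrC mulfK -?normr_gt0 //.
have [->|ct0] := eqVneq c t; first by rewrite subrr normr0 mulr_ge0.
have -> : c = t + (c - t) by rewrite addrC subrK.
apply: le_trans (f'K _ _) (ler_wpM2l K0 ct).
by rewrite normr_gt0 subr_eq0 ct0 (le_lt_trans ct).
Qed.
End DifferenceQuotients.

Lemma trunc_err_O_delta_smooth (R : realType) n (MD SD MF SF : 'M[R]_n)
    (xi : 'I_n -> R -> R) :
  (forall j, smooth (xi j)) -> forall t, trunc_err_O_delta MD SD MF SF xi t.
Proof.
move=> xis t.
pose fwd j d := d^-1 * (xi j (t + d) - xi j t) - derive1 (xi j) t.
pose bwd j d := d^-1 * (xi j t - xi j (t - d)) - derive1 (xi j) t.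
pose inc j d := xi j (t + d) - xi j t.
have fwdO j : bigO_at0 (fwd j).
  apply: diff_quotient_bigO => [x|]; first by have := xis j 0%N x; rewrite derive1n0.
  by have := xis j 1%N t; rewrite derive1n1.
have bwdO j : bigO_at0 (bwd j).
  apply: bigO_at0_eq (bigO_at0_reflect (fwdO j)) => d _.
  by rewrite /fwd /bwd invrN mulNr -mulrN opprB.
have incO j : bigO_at0 (inc j).
  have := bigO_at0D (bigO_at0_mul_id (fwdO j))
    (bigO_at0Ml (derive1 (xi j) t) bigO_at0_id).
  by apply: bigO_at0_eq => d d0; rewrite /fwd /inc /=; field.
pose err i d := \sum_j (MD i j * fwd j d + MF i j * bwd j d + SD i j * inc j d).
have errO i : bigO_at0 (err i).
  apply: bigO_at0_sum => j.
  by apply: bigO_at0D; [apply: bigO_at0D|]; apply: bigO_at0Ml.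
have [K [e [e0 errK]]] := bigO_at0_uniform errO.
exists K, e; split=> // d /errK bd i.
suff -> : (Ddisc MD SD MF SF xi d t - Dcont MD SD MF SF xi t) i 0 = err i d by [].
rewrite /err /Ddisc /Dcont /vecfun /vecderiv !mxE -!big_split /= -sumrB.
by apply: eq_bigr => j _; rewrite !mxE /fwd /bwd /inc; ring.
Qed.

Lemma rec_le_geometric (R : realFieldType) (a : nat -> R) (r s K : R) :
  0 <= r < s -> 0 <= K -> 0 <= a 0%N ->
  (forall k, a k.+1 <= r * a k + K * s ^+ k) ->
  forall k, a k <= (a 0%N + K / (s - r)) * s ^+ k.
Proof.
move=> /andP[r0 rs] K0 a00 arec; set C := a 0%N + K / (s - r).
have sr0 : 0 < s - r by rewrite subr_gt0.
have KC : K <= (s - r) * C.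
  by rewrite mulrDr mulrCA divff ?gt_eqF // mulr1 lerDr mulr_ge0 // ltW.
have sk0 k : 0 <= s ^+ k by rewrite exprn_ge0 // (le_trans r0) // ltW.
elim=> [|k IH]; first by rewrite expr0 mulr1 lerDl divr_ge0 // ltW.
apply: le_trans (arec k) _.
have h1 := ler_wpM2l r0 IH.
have h2 := ler_wpM2r (sk0 k) KC.
rewrite exprS; nra.
Qed.

Section SpectralDecay.
Context {R : realType}.
Local Notation C := R[i].
Import Normc.
Local Open Scope complex_scope.

Lemma normc_ge0 (z : C) : 0 <= normc z.
Proof. by case: z => a b; apply: sqrtr_ge0. Qed.

Lemma normr_normc (z : C) : `|z| = (normc z)%:C.
Proof. by case: z. Qed.

Lemma normc_real (x : R) : normc x%:C = `|x|.
Proof. by rewrite /normc /= expr0n /= addr0 sqrtr_sqr. Qed.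

Lemma mx_pow_decay_roots {n m} {A : 'M[C]_n.+1} {rs : seq C} {rho s : R} :
  (forall z, z \in rs -> normc z <= rho) -> rho < s ->
  forall B : 'M[C]_(n.+1, m),
  horner_mx A (\prod_(z <- rs) ('X - z%:P)) *m B = 0 ->
  exists2 K, 0 <= K & forall k i j, normc ((A ^+ k *m B) i j) <= K * s ^+ k.
Proof.
move=> + rho_s; elim: rs => [|z rs IH] rs_rho B.
  rewrite big_nil rmorph1 mul1mx => ->.
  by exists 0 => // k i j; rewrite mulmx0 mxE normc0 mul0r.
rewrite big_cons mulrC rmorphM /= rmorphB /= horner_mx_X horner_mx_C.
rewrite -mulmxE -mulmxA => AB.
have rs_rho' y : y \in rs -> normc y <= rho.
  by move=> y_rs; apply: rs_rho; rewrite inE y_rs orbT.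
have [K' K'0 K'B] := IH rs_rho' _ AB.
have zs : 0 <= normc z < s.
  by rewrite normc_ge0 (le_lt_trans (rs_rho z (mem_head _ _))).
pose M := \big[Num.max/0]_(ij : 'I_n.+1 * 'I_m) normc (B ij.1 ij.2).
exists (M + K' / (s - normc z)) => [|k i j].
  by rewrite addr_ge0 ?bigmax_ge_id // divr_ge0 // subr_ge0 ltW; case/andP: zs.
have Arec l : A ^+ l.+1 *m B = z *: (A ^+ l *m B) + A ^+ l *m ((A - z%:M) *m B).
  have AlA : A ^+ l *m A = A ^+ l.+1 by rewrite exprSr.
  by rewrite mulmxBl mulmxBr mul_scalar_mx scalemxAr mulmxA AlA addrC subrK.
pose a l := normc ((A ^+ l *m B) i j).
apply: le_trans (@rec_le_geometric _ a _ _ _ zs K'0 (normc_ge0 _) _ k) _ => [l|].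
  rewrite /a Arec mxE [X in normc (X + _)]mxE (le_trans (le_normcD _ _)) //.
  by rewrite normcM lerD2l.
have s0 : 0 <= s by case/andP: zs => z0 /ltW; apply: le_trans.
rewrite ler_wpM2r ?exprn_ge0 // lerD2r /a expr0 mul1mx.
exact: (le_bigmax _ (fun ij : 'I_n.+1 * 'I_m => normc (B ij.1 ij.2)) (i, j)).
Qed.

Lemma normc_le_spectral_radius n (A : 'M[R]_n) (lam : C) :
  eigenvalue (map_mx (real_complex R) A) lam -> normc lam <= spectral_radius A.
Proof.
have [rs charE] := closed_field_poly_normal (char_poly (map_mx (real_complex R) A)).
rewrite (monicP (char_poly_monic _)) scale1r in charE.
have eig_rs mu : eigenvalue (map_mx (real_complex R) A) mu -> mu \in rs.
  by rewrite eigenvalue_root_char charE root_prod_XsubC.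
move=> lam_eig; apply: ub_le_sup; last by exists lam; rewrite -normr_normc.
exists (\big[Num.max/0]_(y <- rs) normc y) => r [mu [/eig_rs mu_rs]].
rewrite normr_normc => /complexI ->; exact: le_bigmax_seq.
Qed.

Lemma mx_pow_decay {n m} {A : 'M[R]_n} (B : 'M[R]_(n, m)) {s : R} :
  spectral_radius A < s ->
  exists K, forall k i j, `|(A ^+ k *m B) i j| <= K * s ^+ k.
Proof.
case: n A B => [|n] A B rho_s; first by exists 0 => k [].
pose Ac := map_mx (real_complex R) A.
have [rs charE] := closed_field_poly_normal (char_poly Ac).
rewrite (monicP (char_poly_monic _)) scale1r in charE.
have rs_rho z : z \in rs -> normc z <= spectral_radius A.
  move=> z_rs; apply: normc_le_spectral_radius.
  by rewrite eigenvalue_root_char charE root_prod_XsubC.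
have CH :
    horner_mx Ac (\prod_(z <- rs) ('X - z%:P)) *m map_mx (real_complex R) B = 0.
  by rewrite -charE Cayley_Hamilton mul0mx.
have [K _ KB] := mx_pow_decay_roots rs_rho rho_s _ CH.
exists K => k i j; rewrite -normc_real.
have -> : ((A ^+ k *m B) i j)%:C = (Ac ^+ k *m map_mx (real_complex R) B) i j.
  by rewrite /Ac -(rmorphXn (map_mx (real_complex R))) -map_mxM [RHS]mxE.
exact: KB.
Qed.

End SpectralDecay.

Lemma zero_stable_spectral_radius_lt1 (R : realType) n (MD MF : 'M[R]_n) :
  MD \in unitmx -> spectral_radius (invmx MD *m MF) < 1 -> zero_stable MD MF.
Proof.
move=> MDu rho1 x xrec; set A := invmx MD *m MF in rho1.
pose d l := x l.+1 - x l.
have dS l : d l.+1 = - (A *m d l).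
  move/eqP: (xrec l); rewrite -/(d l) -/(d l.+1) addr_eq0 => /eqP dE.
  by rewrite -(mulKmx MDu (d l.+1)) dE /A mulmxN mulmxA.
have dE l : d l = (-1) ^+ l *: (A ^+ l *m d 0%N).
  elim: l => [|l IH]; first by rewrite expr0 scale1r expr0 mul1mx.
  have AAl : A *m A ^+ l = A ^+ l.+1 by rewrite exprS.
  by rewrite dS IH exprS mulN1r scaleNr -scalemxAr mulmxA AAl.
pose s := (Num.max (spectral_radius A) 0 + 1) / 2.
have [rho_s s0 s1] : [/\ spectral_radius A < s, 0 < s & s < 1].
  have : spectral_radius A <= Num.max (spectral_radius A) 0 by rewrite le_max lexx.
  have : 0 <= Num.max (spectral_radius A) 0 by rewrite le_max lexx orbT.
  have : Num.max (spectral_radius A) 0 < 1 by rewrite gt_max rho1 ltr01.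
  rewrite /s; move: (Num.max _ _) => r; split; lra.
have [K KB] := mx_pow_decay (d 0%N) rho_s.
have d_le j i : `|d j i 0| <= K * s ^+ j.
  by rewrite dE mxE normrM normrX normrN normr1 expr1n mul1r KB.
exists (\big[Num.max/0]_i `|x 0%N i 0| + K * (1 - s)^-1) => l i.
have K0 : 0 <= K by have := d_le 0%N i; rewrite expr0 mulr1; apply: le_trans.
have xE : x l = x 0%N + \sum_(0 <= j < l) d j.
  by rewrite telescope_sumr // addrC subrK.
rewrite xE mxE summxE (le_trans (ler_normD _ _)) // lerD //.
  exact: (le_bigmax _ (fun i => `|x 0%N i 0|) i).
rewrite (le_trans (ler_norm_sum _ _ _)) //.
rewrite (le_trans (ler_sum_nat (fun j _ => d_le j i))) //.
rewrite -[X in X <= _]/(series (geometric K s) l).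
by rewrite geometric_le_lim // ger0_norm // ltW.
Qed.

Lemma unitmx_mxdiag (F : fieldType) (N : nat) (p : 'I_N -> nat)
    (B : forall m, 'M[F]_(p m)) :
  (forall m, B m \in unitmx) -> \mxdiag_(m < N) B m \in unitmx.
Proof.
move=> Bu; rewrite -row_free_unit /row_free rank_mxdiag.
by apply/eqP/eq_bigr => m _; apply: mxrank_unit.
Qed.

Lemma posdef_unitmx (R : realType) n (A : 'M[R]_n) : posdef A -> A \in unitmx.
Proof.
move=> Apd; rewrite unitmxE unitfE; apply/negP => /det0P [v v0 vA].
have := Apd v^T; rewrite trmx_eq0 v0 trmxK vA mul0mx mxE => /(_ isT).
by rewrite ltxx.
Qed.

Theorem theorem1 (R : realType) (N : nat) (p : 'I_N -> nat)
  (MB SB : forall m : 'I_N, 'M[R]_(p m))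
  (MF SF : 'M[R]_(\sum_(m < N) p m)) :
  (forall m : 'I_N, posdef (MB m)) ->
  (forall m : 'I_N, posdef (SB m)) ->
  let MD := \mxdiag_(m < N) MB m in
  let SD := \mxdiag_(m < N) SB m in
  (forall (xi : 'I_(\sum_(m < N) p m) -> R -> R),
      (forall i, smooth (xi i)) ->
      forall t : R, trunc_err_O_delta MD SD MF SF xi t)
  /\
  (spectral_radius (invmx MD *m MF) < 1 -> zero_stable MD MF).
Proof.
move=> MBpd _ MD SD; split; first exact: trunc_err_O_delta_smooth.
apply: zero_stable_spectral_radius_lt1.
by apply: unitmx_mxdiag => m; apply: posdef_unitmx.
Qed.
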